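(* Let $G$ be a connected graph with $n$ vertices and $m$ edges, and let $r$ be a vertex of $G$. Consider assignments $s$ that map each vertex $v\neq r$ to a neighbour $s(v)$ of $v$, viewed as the directed subgraph with arcs $v\to s(v)$, $v\ne r$. Let $Z_{\mathrm{tree},0}$ be the number of such assignments whose directed subgraph is a (spanning) tree directed towards the root $r$ (equivalently, contains no directed cycle), and let $Z_{\mathrm{tree},1}$ be the number of such assignments whose directed subgraph contains exactly one directed cycle. Then $\frac{Z_{\mathrm{tree},1}}{Z_{\mathrm{tree},0}}\le mn$. *)

From mathcomp Require Import all_boot all_order all_algebra.
Set Implicit Arguments. Unset Strict Implicit. Unset Printing Implicit Defensive.

Definition simple_graph (T : finType) (e : rel T) : Prop :=
  symmetric e /\ irreflexive e.

Definition connected_graph (T : finType) (e : rel T) : Prop :=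
  forall x y : T, connect e x y.

Definition num_edges (T : finType) (e : rel T) : nat :=
  #|[set E : {set T} | [exists x, exists y, (E == [set x; y]) && e x y]]|.

(* Assignments v |-> s(v), a neighbour of v, for v <> r.  Encoded as finite
   functions with the normalisation s r = r (bijective with the paper's
   assignments, which are undefined at r). *)
Definition assignment (T : finType) (e : rel T) (r : T) (s : {ffun T -> T}) : bool :=
  (s r == r) && [forall v, (v != r) ==> e v (s v)].

(* v lies on a directed cycle of the digraph with arcs v -> s v (v <> r).
   Since s r = r, an orbit reaching r stays there and never comes back. *)
Definition on_cycle (T : finType) (r : T) (s : {ffun T -> T}) (v : T) : bool :=
  (v != r) && [exists k : 'I_#|T|, iter k.+1 s v == v].

Definition acyclic_assignment (T : finType) (r : T) (s : {ffun T -> T}) : bool :=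
  [forall v, ~~ on_cycle r s v].

(* Exactly one directed cycle: some vertex is on a cycle, and all vertices on
   cycles lie on the same cycle (cycles in a functional digraph are disjoint,
   and u, w on cycles lie on the same cycle iff w is reached from u). *)
Definition unicyclic_assignment (T : finType) (r : T) (s : {ffun T -> T}) : bool :=
  [exists v, on_cycle r s v] &&
  [forall u, forall w, (on_cycle r s u && on_cycle r s w) ==>
     [exists k : 'I_#|T|, iter k s u == w]].

Definition Z_tree0 (T : finType) (e : rel T) (r : T) : nat :=
  #|[set s : {ffun T -> T} | assignment e r s && acyclic_assignment r s]|.

Definition Z_tree1 (T : finType) (e : rel T) (r : T) : nat :=
  #|[set s : {ffun T -> T} | assignment e r s && unicyclic_assignment r s]|.

(* Cutting the cycle of a unicyclic assignment s at one of its vertices c (dropping the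
   arc c -> s c) leaves two trees, rooted at r and at c.  As the graph is connected, some
   edge x y leads from the tree of c to the tree of r; reversing the path from x to c and
   adding the arc x -> y gives a spanning tree t directed towards r.  Reversing the path
   from c back to x in t and restoring the arc c -> s c recovers s, so (s, c) is
   determined by t, the vertex x <> r and the arc (c, s c).  Letting c range over two
   consecutive (hence distinct, since there are no loops) vertices of the cycle gives
   2 Z_tree1 <= Z_tree0 (n - 1) 2m. *)

From mathcomp Require Import all_boot all_order all_algebra.
From mathcomp Require Import zify.
Import GRing.Theory Num.Theory.
Set Implicit Arguments. Unset Strict Implicit. Unset Printing Implicit Defensive.

Section FunctionalGraph.
Variables (T : finType) (f : T -> T).

Lemma fconnect_fixpoint a v : f a = a -> fconnect f a v -> v = a.
Proof. by move=> fa /iter_findex <-; rewrite iter_fix. Qed.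

Lemma fconnect_total v a b :
  fconnect f v a -> fconnect f v b -> fconnect f a b || fconnect f b a.
Proof.
move=> /iter_findex <- /iter_findex <-.
case: (leqP (findex f v a) (findex f v b)) => [/subnK <- | /ltnW /subnK <-];
  by rewrite iterD fconnect_iter ?orbT.
Qed.

Lemma fconnect_fixpoints_eq v a b :
  f a = a -> f b = b -> fconnect f v a -> fconnect f v b -> a = b.
Proof.
move=> fa fb va vb.
by case/orP: (fconnect_total va vb) => [/(fconnect_fixpoint fa) | /(fconnect_fixpoint fb)].
Qed.

Lemma periodic_fconnect_fixpoint a w p :
  f a = a -> iter p.+1 f w = w -> fconnect f w a -> w = a.
Proof.
move=> fa fw wa; apply: (fconnect_fixpoint fa).
have wE : iter (findex f w a * p.+1) f w = w by rewrite iterM iter_fix.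
rewrite -wE -(subnK (leq_pmulr (findex f w a) (ltn0Sn p))) iterD iter_findex //.
exact: fconnect_iter.
Qed.

End FunctionalGraph.

Lemma fconnect_on_cycle (T : finType) (s : {ffun T -> T}) r v :
  ~~ fconnect s v r -> exists2 w, on_cycle r s w & fconnect s v w.
Proof.
move=> v_r; set o := order s v.
have v_loop : fconnect s v (iter o s v) by exact: fconnect_iter.
have lt_io := findex_max v_loop; set i := findex s v (iter o s v) in lt_io.
exists (iter i s v); last exact: fconnect_iter.
apply/andP; split; first by apply: contra v_r => /eqP <-; exact: fconnect_iter.
have le_oT : o <= #|T| by exact: max_card.
have lt_period : (o - i).-1 < #|T|.
  by rewrite prednK ?subn_gt0 // (leq_trans _ le_oT) // leq_subr.
apply/existsP; exists (Ordinal lt_period) => /=.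
by rewrite -iterS prednK ?subn_gt0 // -iterD subnK ?(ltnW lt_io) // iter_findex.
Qed.

Definition redirect (T : finType) (f : {ffun T -> T}) (a d : T) : {ffun T -> T} :=
  [ffun v => if v == a then d else f v].

Section Redirect.
Variables (T : finType) (f : {ffun T -> T}).

Lemma redirect_at a d : redirect f a d a = d.
Proof. by rewrite ffunE eqxx. Qed.

Lemma redirect_other a d v : v != a -> redirect f a d v = f v.
Proof. by rewrite ffunE => /negbTE ->. Qed.

Lemma redirectK a d : redirect (redirect f a d) a (f a) = f.
Proof. by apply/ffunP => v; rewrite !ffunE; case: eqP => [->|]. Qed.

Lemma fconnect_cut a v b :
  fconnect f v b -> fconnect (redirect f a a) v b || fconnect (redirect f a a) v a.
Proof.
move=> vb; rewrite -(iter_findex vb); move: (findex f v b) => j.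
elim: j v {vb} => [|j IH] v; first by rewrite connect0.
have [->|va] := eqVneq v a; first by rewrite connect0 orbT.
have step : fconnect (redirect f a a) v (f v).
  by rewrite -(redirect_other a va); exact: fconnect1.
by rewrite iterSr; case/orP: (IH (f v)) => /(connect_trans step) ->; rewrite ?orbT.
Qed.

End Redirect.

Definition on_path (T : finType) (f : T -> T) (a b v : T) :=
  fconnect f a v && (findex f a v <= findex f a b).

(* On the f-path a = p_0 -> ... -> p_k = b, maps p_(i+1) to p_i and p_0 to d. *)
Definition flip_path (T : finType) (f : {ffun T -> T}) (a b d : T) : {ffun T -> T} :=
  [ffun v => if v == a then d
             else if on_path f a b v then iter (findex f a v).-1 f a else f v].

Lemma on_pathP (T : finType) (f : T -> T) a b v :
  on_path f a b v -> exists2 i, i <= findex f a b & iter i f a = v.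
Proof. by case/andP=> av le_vb; exists (findex f a v); rewrite ?iter_findex. Qed.

Section FlipPath.
Variables (T : finType) (f : {ffun T -> T}) (a b d : T).
Hypothesis ab : fconnect f a b.
Local Notation k := (findex f a b).
Local Notation g := (flip_path f a b d).

Lemma findex_path i : i <= k -> findex f a (iter i f a) = i.
Proof.
by move=> le_ik; rewrite findex_iter // (leq_ltn_trans le_ik (findex_max ab)).
Qed.

Lemma on_path_iter i : i <= k -> on_path f a b (iter i f a).
Proof. by move=> le_ik; rewrite /on_path fconnect_iter findex_path. Qed.

Lemma on_path_end : on_path f a b b.
Proof. by rewrite /on_path ab leqnn. Qed.

Lemma flip_path_start : g a = d.
Proof. by rewrite ffunE eqxx. Qed.

Lemma flip_path_step i : i < k -> g (iter i.+1 f a) = iter i f a.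
Proof.
move=> lt_ik; rewrite ffunE on_path_iter // findex_path //.
by case: eqP => // /(congr1 (findex f a)); rewrite findex_path // findex0.
Qed.

Lemma flip_path_off v : ~~ on_path f a b v -> g v = f v.
Proof.
move=> off; rewrite ffunE (negbTE off); case: eqP => // va.
by move: off; rewrite va /on_path connect0 findex0.
Qed.

Lemma iter_flip_path i : i <= k -> iter i g b = iter (k - i) f a.
Proof.
elim: i => [|i IH] le_ik; first by rewrite subn0 iter_findex.
rewrite iterS IH ?(ltnW le_ik) // -subnSK // flip_path_step //.
by rewrite ltn_subrL (leq_ltn_trans _ le_ik).
Qed.

Lemma findex_flip_path_lt_order : k < order g b.
Proof.
have ba : fconnect g b a.
  by have := fconnect_iter g k b; rewrite iter_flip_path // subnn.
case: (leqP k (findex g b a)) => [le_k | lt_k].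
  exact: leq_ltn_trans le_k (findex_max ba).
have := iter_findex ba; rewrite iter_flip_path ?(ltnW lt_k) // => /(congr1 (findex f a)).
by rewrite findex_path ?leq_subr // findex0 => /eqP; rewrite subn_eq0 leqNgt lt_k.
Qed.

Lemma findex_flip_path i : i <= k -> findex g b (iter i g b) = i.
Proof.
by move=> le_ik; rewrite findex_iter // (leq_ltn_trans le_ik findex_flip_path_lt_order).
Qed.

Lemma findex_flip_path_end : findex g b a = k.
Proof.
by have := findex_flip_path (leqnn k); rewrite iter_flip_path // subnn.
Qed.

Lemma on_path_flip_path v : on_path g b a v = on_path f a b v.
Proof.
apply/idP/idP => /on_pathP [i]; rewrite ?findex_flip_path_end => le_ik <-.
  by rewrite iter_flip_path // on_path_iter // leq_subr.
rewrite -(subKn le_ik) -iter_flip_path ?leq_subr // /on_path fconnect_iter.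
by rewrite findex_flip_path ?findex_flip_path_end leq_subr.
Qed.

Lemma flip_pathK d' : flip_path g b a d' = redirect f b d'.
Proof.
apply/ffunP => v; rewrite [LHS]ffunE [RHS]ffunE; case: eqP => // /eqP vb.
case: ifP => [onv | /negbT]; last first.
  by rewrite on_path_flip_path => /flip_path_off.
case/on_pathP: (onv) => j; rewrite findex_flip_path_end => le_jk vE.
have j_gt0 : 0 < j by rewrite lt0n; apply: contra_neq vb => j0; rewrite -vE j0.
rewrite -vE findex_flip_path // !iter_flip_path ?(leq_trans (leq_pred j)) //.
by rewrite -iterS; congr iter; lia.
Qed.

End FlipPath.

Lemma acyclic_of_fconnect_root (T : finType) (t : {ffun T -> T}) r :
  t r = r -> (forall v, fconnect t v r) -> acyclic_assignment r t.
Proof.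
move=> t_r to_r; apply/forallP => v; apply/negP => /andP [vr /existsP [p /eqP tv]].
by move/eqP: vr; apply; apply: periodic_fconnect_fixpoint t_r tv (to_r v).
Qed.

Section Reroot.
Variables (T : finType) (f : {ffun T -> T}) (r c x y : T).
Hypotheses (f_r : f r = r) (f_c : f c = c) (c_neq_r : c != r).
Hypothesis to_r_or_c : forall v, fconnect f v r || fconnect f v c.
Hypotheses (x_c : fconnect f x c) (y_r : fconnect f y r).
Local Notation t := (flip_path f x c y).

Lemma fconnect_root_cut_excl v : fconnect f v r -> fconnect f v c -> False.
Proof. by move=> vr vc; move/eqP: c_neq_r; apply; exact: fconnect_fixpoints_eq vc vr. Qed.

Lemma on_path_fconnect_end v : on_path f x c v -> fconnect f v c.
Proof.
case/andP=> x_v _; case/orP: (fconnect_total x_v x_c) => // c_v.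
by rewrite (fconnect_fixpoint f_c c_v) connect0.
Qed.

Lemma flip_path_eq_on_root_tree v : fconnect f v r -> t v = f v.
Proof.
move=> vr; apply: flip_path_off; apply/negP => /on_path_fconnect_end.
exact: fconnect_root_cut_excl.
Qed.

Lemma fconnect_flip_path_root_of_tree v : fconnect f v r -> fconnect t v r.
Proof.
move=> /iter_findex; move: (findex f v r) => j.
elim: j v => [|j IH] v vr; first by rewrite -vr connect0.
have v_r : fconnect f v r by rewrite -vr fconnect_iter.
rewrite iterSr in vr; apply: connect_trans (IH _ vr).
by rewrite -(flip_path_eq_on_root_tree v_r); exact: fconnect1.
Qed.

Lemma fconnect_flip_path_start v : on_path f x c v -> fconnect t v x.
Proof.
case/on_pathP=> i le_ik <-.
suff back : iter i t (iter i f x) = x.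
  by rewrite -[X in fconnect _ _ X]back fconnect_iter.
elim: i le_ik => [|i IH] lt_ik //.
by rewrite iterSr flip_path_step // IH // ltnW.
Qed.

Lemma fconnect_flip_path_root v : fconnect t v r.
Proof.
have x_r : fconnect t x r.
  apply: connect_trans (fconnect1 _ x) _.
  by rewrite flip_path_start; exact: fconnect_flip_path_root_of_tree.
case/orP: (to_r_or_c v) => [|/iter_findex]; first exact: fconnect_flip_path_root_of_tree.
move: (findex f v c) => j; elim: j v => [|j IH] v vc.
  rewrite /= in vc; rewrite vc.
  exact: connect_trans (fconnect_flip_path_start (on_path_end x_c)) x_r.
have [onv | offv] := boolP (on_path f x c v).
  exact: connect_trans (fconnect_flip_path_start onv) x_r.
rewrite iterSr in vc; apply: connect_trans (IH _ vc).
by rewrite -(flip_path_off y offv); exact: fconnect1.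
Qed.

Lemma flip_path_fixes_root : t r = r.
Proof. by rewrite flip_path_eq_on_root_tree ?connect0. Qed.

Lemma flip_path_acyclic : acyclic_assignment r t.
Proof. exact: acyclic_of_fconnect_root flip_path_fixes_root fconnect_flip_path_root. Qed.

Lemma path_start_neq_root : x != r.
Proof.
by apply: contraTneq x_c => ->; apply/negP; exact: fconnect_root_cut_excl (connect0 _ r).
Qed.

Lemma flip_path_edges (e : rel T) : symmetric e -> e x y ->
  (forall v, v != r -> v != c -> e v (f v)) -> forall v, v != r -> e v (t v).
Proof.
move=> e_sym e_xy f_e v vr; have [->|vx] := eqVneq v x; first by rewrite flip_path_start.
have [onv | offv] := boolP (on_path f x c v); last first.
  rewrite flip_path_off // f_e //; apply: contraNneq offv => ->.
  exact: on_path_end.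
case/on_pathP: onv => [[|i] le_ik vE]; first by rewrite -vE eqxx in vx.
rewrite -vE flip_path_step // e_sym iterS f_e //.
  apply/negP => /eqP ir; apply: (@fconnect_root_cut_excl r); first exact: connect0.
  by rewrite -ir; apply: on_path_fconnect_end; rewrite on_path_iter // ltnW.
apply/eqP => ic; have := findex_path x_c (ltnW le_ik).
by rewrite ic => ik; rewrite ik ltnn in le_ik.
Qed.

End Reroot.

Lemma assignmentP (T : finType) (e : rel T) r (s : {ffun T -> T}) :
  reflect (s r = r /\ forall v, v != r -> e v (s v)) (assignment e r s).
Proof.
apply: (iffP andP) => [[/eqP s_r /forallP s_e] | [s_r s_e]].
  by split=> // v; apply/implyP.
by split; [apply/eqP | apply/forallP => v; apply/implyP; exact: s_e].
Qed.

Lemma on_cycle_next (T : finType) r (s : {ffun T -> T}) c :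
  s r = r -> on_cycle r s c -> on_cycle r s (s c).
Proof.
move=> s_r /andP [cr /existsP [k /eqP kc]]; apply/andP; split.
  by apply: contra_neq cr => scr; rewrite -kc iterSr scr iter_fix.
by apply/existsP; exists k; rewrite -iterSr iterS kc.
Qed.

Lemma connect_cross (T : finType) (e : rel T) (P : pred T) a b :
  connect e a b -> P a -> ~~ P b -> exists x y, [&& P x, ~~ P y & e x y].
Proof.
move=> /connectP [p ep ->] {b}; elim: p a ep => [|z p IH] a /=; first by move=> _ ->.
case/andP=> e_az ep Pa; case Pz: (P z); first exact: IH.
by move=> _; exists a, z; rewrite Pa Pz e_az.
Qed.

Definition some_cycle_vertex (T : finType) (r : T) (s : {ffun T -> T}) : T :=
  odflt r [pick c | on_cycle r s c].

Definition cycle_vertex (T : finType) (r : T) (s : {ffun T -> T}) (b : bool) : T :=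
  if b then some_cycle_vertex r s else s (some_cycle_vertex r s).

Definition crossing_edge (T : finType) (e : rel T) (r : T) (f : T -> T) (c : T) : T * T :=
  odflt (r, r) [pick p : T * T | [&& fconnect f p.1 c, fconnect f p.2 r & e p.1 p.2]].

Definition encode (T : finType) (e : rel T) (r : T) (sb : {ffun T -> T} * bool) :=
  let c := cycle_vertex r sb.1 sb.2 in
  let f := redirect sb.1 c c in
  let xy := crossing_edge e r f c in
  (flip_path f xy.1 c xy.2, xy.1, (c, sb.1 c)).

Section Unicyclic.
Variables (T : finType) (e : rel T) (r : T) (s : {ffun T -> T}).
Hypotheses (e_sym : symmetric e) (e_irr : irreflexive e) (e_conn : connected_graph e).
Hypotheses (s_r : s r = r) (s_e : forall v, v != r -> e v (s v)).
Hypothesis s_uni : unicyclic_assignment r s.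

Lemma on_cycle_fconnect c w : on_cycle r s c -> on_cycle r s w -> fconnect s w c.
Proof.
move=> cc cw; case/andP: s_uni => _ /forallP /(_ w) /forallP /(_ c).
by rewrite cw cc => /existsP [k /eqP <-]; exact: fconnect_iter.
Qed.

Lemma cut_cycle_to_root_or_cut c v : on_cycle r s c ->
  fconnect (redirect s c c) v r || fconnect (redirect s c c) v c.
Proof.
move=> cc; have [vr | /fconnect_on_cycle [w cw vw]] := boolP (fconnect s v r).
  by case/orP: (fconnect_cut c vr) => ->; rewrite ?orbT.
have vc := connect_trans vw (on_cycle_fconnect cc cw).
by case/orP: (fconnect_cut c vc) => ->; rewrite orbT.
Qed.

Lemma cycle_vertexP b : on_cycle r s (cycle_vertex r s b).
Proof.
have c0P : on_cycle r s (some_cycle_vertex r s).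
  case/andP: s_uni => /existsP [v cv] _; rewrite /some_cycle_vertex.
  by case: pickP => [c -> | /(_ v)] //=; rewrite cv.
by case: b => //=; exact: on_cycle_next.
Qed.

Lemma cycle_vertex_inj : injective (cycle_vertex r s).
Proof.
have c0_neq : s (some_cycle_vertex r s) != some_cycle_vertex r s.
  case/andP: (cycle_vertexP true) => c0r _.
  by apply: contraTneq (s_e c0r) => ->; rewrite e_irr.
case=> [] [] //= c0E; move: c0_neq; [rewrite -c0E | rewrite c0E]; by rewrite eqxx.
Qed.

Lemma crossing_edgeP c : on_cycle r s c ->
  let xy := crossing_edge e r (redirect s c c) c in
  [&& fconnect (redirect s c c) xy.1 c, fconnect (redirect s c c) xy.2 r & e xy.1 xy.2].
Proof.
move=> cc /=; rewrite /crossing_edge; case: pickP => [xy -> // | no_edge].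
have c_not_r : ~~ fconnect (redirect s c c) c r.
  case/andP: cc => c_neq_r _.
  by apply: contra c_neq_r => /(fconnect_fixpoint (redirect_at s c c)) ->.
have [x [y /and3P [xr /negPn yr e_xy]]] :=
  connect_cross (P := fun v => ~~ fconnect (redirect s c c) v r)
    (e_conn c r) c_not_r (introT negPn (connect0 _ r)).
have := no_edge (x, y); rewrite /= yr e_xy !andbT.
by have := cut_cycle_to_root_or_cut x cc; rewrite (negbTE xr) => /= ->.
Qed.

Lemma encodeP b (c := cycle_vertex r s b) (f := redirect s c c)
    (xy := crossing_edge e r f c) (t := flip_path f xy.1 c xy.2) :
  [/\ assignment e r t && acyclic_assignment r t, xy.1 != r, e c (s c)
    & flip_path t c xy.1 (s c) = s].
Proof.
have cc : on_cycle r s c := cycle_vertexP b.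
have c_neq_r : c != r by case/andP: cc.
have f_r : f r = r by rewrite redirect_other // eq_sym.
have f_c : f c = c := redirect_at s c c.
have r_or_c v := cut_cycle_to_root_or_cut v cc.
case/and3P: (crossing_edgeP cc) => x_c y_r e_xy.
split.
- apply/andP; split; last exact: flip_path_acyclic r_or_c x_c y_r.
  apply/assignmentP; split; first exact: flip_path_fixes_root x_c.
  apply: flip_path_edges => // v vr vc.
  by rewrite redirect_other // s_e.
- exact: path_start_neq_root x_c.
- exact: s_e.
- by rewrite flip_pathK // redirectK.
Qed.

End Unicyclic.

Lemma card_arcs_le (T : finType) (e : rel T) :
  irreflexive e -> #|[set p : T * T | e p.1 p.2]| <= 2 * num_edges e.
Proof.
move=> e_irr; rewrite /num_edges mulnC -[2]card_bool -cardsT -cardsX.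
pose edge_of (p : T * T) := ([set p.1; p.2], enum_rank p.1 < enum_rank p.2).
rewrite -(@card_in_imset _ _ edge_of).
  apply/subset_leq_card/subsetP => q /imsetP [[a b] ab ->].
  rewrite !inE andbT; apply/existsP; exists a; apply/existsP; exists b.
  by rewrite eqxx; rewrite inE in ab.
move=> [a b] [a' b']; rewrite !inE /= => ab _ [E ltE].
have a_neq_b : a != b by apply: contraTneq ab => ->; rewrite e_irr.
have a_in : a \in [set a'; b'] by rewrite -E set21.
have b_in : b \in [set a'; b'] by rewrite -E set22.
move: ltE a_neq_b; case/set2P: a_in => ->; case/set2P: b_in => -> //; rewrite ?eqxx //.
by case: ltngtP => // /val_inj/enum_rank_inj ->; rewrite eqxx.
Qed.

Lemma Z_tree1_double_le (T : finType) (e : rel T) (r : T) :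
  simple_graph e -> connected_graph e ->
  Z_tree1 e r * 2 <= Z_tree0 e r * #|T|.-1 * #|[set p : T * T | e p.1 p.2]|.
Proof.
case=> e_sym e_irr e_conn.
rewrite /Z_tree1 /Z_tree0 -(cardsC1 r) -[2]card_bool -cardsT -!cardsX.
rewrite -(@card_in_imset _ _ (encode e r)).
  apply/subset_leq_card/subsetP => q /imsetP [[s b]].
  rewrite !inE andbT /= => /andP [/assignmentP [s_r s_e] s_uni] ->.
  have [tP xr ecd _] := encodeP e_sym e_conn s_r s_e s_uni b.
  by rewrite /= tP xr ecd.
move=> [s1 b1] [s2 b2]; rewrite !inE !andbT /=.
move=> /andP [/assignmentP [s1_r s1_e] s1_uni] /andP [/assignmentP [s2_r s2_e] s2_uni].
case=> tE xE cE scE.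
have [_ _ _ s1E] := encodeP e_sym e_conn s1_r s1_e s1_uni b1.
have [_ _ _ s2E] := encodeP e_sym e_conn s2_r s2_e s2_uni b2.
have s12 : s1 = s2 by rewrite -s1E -s2E tE xE scE cE.
by subst s2; rewrite (cycle_vertex_inj e_irr s1_r s1_e s1_uni cE).
Qed.

Lemma Z_tree1_le (T : finType) (e : rel T) (r : T) :
  simple_graph e -> connected_graph e ->
  Z_tree1 e r <= num_edges e * #|T| * Z_tree0 e r.
Proof.
move=> e_simple e_conn; have le_arcs := card_arcs_le e_simple.2.
have := leq_trans (Z_tree1_double_le r e_simple e_conn) (leq_mul (leqnn _) le_arcs).
have := leq_pred #|T|; nia.
Qed.

Local Open Scope ring_scope.

Theorem theorem18 (T : finType) (e : rel T) (r : T) :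
  simple_graph e -> connected_graph e ->
  ((Z_tree1 e r)%:R / (Z_tree0 e r)%:R : rat) <= ((num_edges e * #|T|)%N)%:R.
Proof.
move=> e_simple e_conn; have [-> | Z0_gt0] := posnP (Z_tree0 e r).
  by rewrite invr0 mulr0.
by rewrite ler_pdivrMr ?ltr0n // -natrM ler_nat Z_tree1_le.
Qed.
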